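(* Under the standing assumptions below, suppose there exists $m\in M$ such that $\phi\left(\left[\begin{smallmatrix} 1 & m\\ 0 & 0\end{smallmatrix}\right]\right)$ is a type 1 idempotent of $T'$. Then (a) $\phi$ maps every idempotent of the form $\left[\begin{smallmatrix} 1 & m\\ 0 & 0\end{smallmatrix}\right]$ ($m\in M$) to a type 1 idempotent; and (b) there exist a fixed element $b'_1\in N'$ and a map $u_1:M\to M'$ such that $\phi\left(\left[\begin{smallmatrix} 1 & m\\ 0 & 0\end{smallmatrix}\right]\right)=\left[\begin{smallmatrix} 1 & u_1(m)\\ b'_1 & 0\end{smallmatrix}\right]$ for all $m\in M$.
   Context: All rings have an identity $1\neq 0$. Standing assumptions: $R,S,R',S'$ are rings whose only idempotents are $0$ and $1$; $M$ is an $R$-$S$-bimodule, $N$ an $S$-$R$-bimodule, $M'$ an $R'$-$S'$-bimodule, $N'$ an $S'$-$R'$-bimodule; $T=\left[\begin{smallmatrix} R & M\\ N & S\end{smallmatrix}\right]$ and $T'=\left[\begin{smallmatrix} R' & M'\\ N' & S'\end{smallmatrix}\right]$ are the Morita context rings with both Morita maps zero, i.e. the sets of formal matrices with entrywise addition and product $\left[\begin{smallmatrix} r & m\\ n & s\end{smallmatrix}\right]\left[\begin{smallmatrix} r' & m'\\ n' & s'\end{smallmatrix}\right]=\left[\begin{smallmatrix} rr' & rm'+ms'\\ nr'+sn' & ss'\end{smallmatrix}\right]$; and $\phi:T\to T'$ is a ring isomorphism. Under these assumptions every idempotent of $T$ (or $T'$) other than $0$ and $1$ has one of the forms $\left[\begin{smallmatrix}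 1 & m\\ n & 0\end{smallmatrix}\right]$ (called a type 1 idempotent) or $\left[\begin{smallmatrix} 0 & m\\ n & 1\end{smallmatrix}\right]$ (called a type 2 idempotent). *)

From HB Require Import structures.
From mathcomp Require Import all_boot all_order all_algebra.
Set Implicit Arguments. Unset Strict Implicit. Unset Printing Implicit Defensive.
Import GRing.Theory.
Local Open Scope ring_scope.

Definition only_trivial_idempotents (R : nzRingType) : Prop :=
  forall e : R, e * e = e -> e = 0 \/ e = 1.

Definition is_bimodule (R S : nzRingType) (M : zmodType)
    (l : R -> M -> M) (r : M -> S -> M) : Prop :=
  (forall a m m', l a (m + m') = l a m + l a m') /\
      (forall a b m, l (a + b) m = l a m + l b m) /\
      (forall a b m, l (a * b) m = l a (l b m)) /\
      (forall m, l 1 m = m) /\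
      (forall m m' s, r (m + m') s = r m s + r m' s) /\
      (forall m s t, r m (s + t) = r m s + r m t) /\
      (forall m s t, r m (s * t) = r (r m s) t) /\
      (forall m, r m 1 = m) /\
      (forall a m s, r (l a m) s = l a (r m s)).

(* Formal matrices [[r, m], [n, s]] of the Morita context ring
   T = [[R, M], [N, S]] with both Morita maps zero. *)
Record mctx (R S M N : Type) := MC { e11 : R; e12 : M; e21 : N; e22 : S }.
Arguments MC {R S M N}.

Section MC.
Variables (R S : nzRingType) (M N : zmodType).
Variables (lM : R -> M -> M) (rM : M -> S -> M) (lN : S -> N -> N) (rN : N -> R -> N).

Definition mc_add (x y : mctx R S M N) : mctx R S M N :=
  MC (e11 x + e11 y) (e12 x + e12 y) (e21 x + e21 y) (e22 x + e22 y).

(* [[r,m],[n,s]] [[r',m'],[n',s']] = [[rr', rm'+ms'],[nr'+sn', ss']] *)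
Definition mc_mul (x y : mctx R S M N) : mctx R S M N :=
  MC (e11 x * e11 y)
     (lM (e11 x) (e12 y) + rM (e12 x) (e22 y))
     (rN (e21 x) (e11 y) + lN (e22 x) (e21 y))
     (e22 x * e22 y).

Definition mc_one : mctx R S M N := MC 1 0 0 1.

Definition type1_idem (x : mctx R S M N) : Prop :=
  mc_mul x x = x /\ e11 x = 1 /\ e22 x = 0.
End MC.

Definition is_ring_iso (R S : nzRingType) (M N : zmodType)
    (lM : R -> M -> M) (rM : M -> S -> M) (lN : S -> N -> N) (rN : N -> R -> N)
    (R' S' : nzRingType) (M' N' : zmodType)
    (lM' : R' -> M' -> M') (rM' : M' -> S' -> M') (lN' : S' -> N' -> N') (rN' : N' -> R' -> N')
    (phi : mctx R S M N -> mctx R' S' M' N') : Prop :=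
  [/\ bijective phi,
      (forall x y, phi (mc_add x y) = mc_add (phi x) (phi y)),
      (forall x y, phi (mc_mul lM rM lN rN x y) = mc_mul lM' rM' lN' rN' (phi x) (phi y)) &
      phi (mc_one R S M N) = mc_one R' S' M' N'].

From HB Require Import structures.
From mathcomp Require Import all_boot all_order all_algebra.
Set Implicit Arguments. Unset Strict Implicit. Unset Printing Implicit Defensive.
Import GRing.Theory.
Local Open Scope ring_scope.

(* Write E_m for the idempotent [[1, m], [0, 0]] of T.  The proof rests on two
   multiplicative facts, neither of which needs the idempotent hypotheses on
   R, S, R', S':
   - in T the E_m form a right-zero semigroup: E_m E_m' = E_m'
     ([row_idem_mul]);
   - in T', an element x absorbed on both sides by a type 1 idempotent
     e = [[1, b], [c, 0]] (that is x e = e and e x = x) has the shape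
     [[1, q], [c, 0]], with the same lower-left entry c as e
     ([absorbed_by_type1]).
   Transporting E_m E_m0 = E_m0 and E_m0 E_m = E_m through phi, where
   phi (E_m0) is the given type 1 idempotent, shows that every phi (E_m) is
   [[1, q_m], [c, 0]] for the fixed c = b'_1; this is (b) with u_1 m := q_m,
   and (a) follows since phi (E_m) is idempotent because E_m is. *)

(* A map preserving sums sends 0 to 0; used for the bimodule actions, whose
   axioms only give additivity in each argument separately. *)
Lemma additive_map0 (V W : zmodType) (f : V -> W) :
  (forall x y, f (x + y) = f x + f y) -> f 0 = 0.
Proof.
by move=> fD; apply: (@addrI _ (f 0)); rewrite -fD !addr0.
Qed.

Section RowIdempotents.
Variables (R S : nzRingType) (M N : zmodType).
Variables (lM : R -> M -> M) (rM : M -> S -> M) (lN : S -> N -> N) (rN : N -> R -> N).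
Hypotheses (hM : is_bimodule lM rM) (hN : is_bimodule lN rN).

Lemma row_idem_mul (m m' : M) :
  mc_mul lM rM lN rN (MC 1 m 0 0) (MC 1 m' 0 0) = MC 1 m' 0 0.
Proof.
case: hM => _ [_ [_ [lM1 [_ [rMD _]]]]].
case: hN => [lND [_ [_ [_ [rND _]]]]].
have rM_0 : rM m 0 = 0 by apply: additive_map0 => x y; exact: rMD.
have rN0_ : rN 0 1 = 0 by apply: (@additive_map0 _ _ (rN^~ 1)) => x y; exact: rND.
have lN_0 : lN 0 0 = 0 by apply: additive_map0 => x y; exact: lND.
by rewrite /mc_mul /= mulr1 mulr0 lM1 rM_0 rN0_ lN_0 !addr0.
Qed.
End RowIdempotents.

Section AbsorbedByType1.
Variables (R S : nzRingType) (M N : zmodType).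
Variables (lM : R -> M -> M) (rM : M -> S -> M) (lN : S -> N -> N) (rN : N -> R -> N).
Hypothesis hN : is_bimodule lN rN.

(* If x e = e and e x = x for e = [[1, b], [c, 0]], then x = [[1, q], [c, 0]]:
   the (1,1) entry of x e forces x11 = 1, the (2,2) entry of e x forces
   x22 = 0, and then the (2,1) entry of e x is c 1 + 0 x21 = c. *)
Lemma absorbed_by_type1 (b : M) (c : N) (x : mctx R S M N) :
  mc_mul lM rM lN rN x (MC 1 b c 0) = MC 1 b c 0 ->
  mc_mul lM rM lN rN (MC 1 b c 0) x = x ->
  x = MC 1 (e12 x) c 0.
Proof.
case: hN => [_ [lND [_ [_ [_ [_ [_ [rN1 _]]]]]]]].
case: x => p q c' d' xe ex.
have p1 : p = 1 by move: (congr1 (@e11 _ _ _ _) xe); rewrite /= mulr1.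
have d0 : d' = 0 by move: (congr1 (@e22 _ _ _ _) ex); rewrite /= mul0r.
have lN0 : lN 0 c' = 0 by apply: (@additive_map0 _ _ (lN^~ c')) => s t; exact: lND.
have cc : c' = c by move: (congr1 (@e21 _ _ _ _) ex); rewrite /= p1 rN1 lN0 addr0.
by rewrite p1 d0 cc.
Qed.
End AbsorbedByType1.

Theorem corollary4p2
  (R S : nzRingType) (M N : zmodType)
  (lM : R -> M -> M) (rM : M -> S -> M) (lN : S -> N -> N) (rN : N -> R -> N)
  (R' S' : nzRingType) (M' N' : zmodType)
  (lM' : R' -> M' -> M') (rM' : M' -> S' -> M') (lN' : S' -> N' -> N') (rN' : N' -> R' -> N')
  (hR : only_trivial_idempotents R) (hS : only_trivial_idempotents S)
  (hR' : only_trivial_idempotents R') (hS' : only_trivial_idempotents S')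
  (hM : is_bimodule lM rM) (hN : is_bimodule lN rN)
  (hM' : is_bimodule lM' rM') (hN' : is_bimodule lN' rN')
  (phi : mctx R S M N -> mctx R' S' M' N')
  (hphi : is_ring_iso lM rM lN rN lM' rM' lN' rN' phi)
  (hex : exists m : M, type1_idem lM' rM' lN' rN' (phi (MC 1 m 0 0))) :
  (forall m : M, type1_idem lM' rM' lN' rN' (phi (MC 1 m 0 0))) /\
  (exists (b1 : N') (u1 : M -> M'),
     forall m : M, phi (MC 1 m 0 0) = MC 1 (u1 m) b1 0).
Proof.
case: hphi => _ _ phiM _.
have E_mul := row_idem_mul hM hN.
case: hex => m0 [_ [e11_0 e22_0]].
pose b1 := e21 (phi (MC 1 m0 0 0)).
pose u1 m := e12 (phi (MC 1 m 0 0)).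
have phi_E0 : phi (MC 1 m0 0 0) = MC 1 (u1 m0) b1 0.
  by rewrite /u1 /b1 -e11_0 -e22_0; case: (phi _).
(* Every phi (E_m) is absorbed on both sides by the type 1 idempotent phi (E_m0). *)
have phi_E m : phi (MC 1 m 0 0) = MC 1 (u1 m) b1 0.
  apply: (absorbed_by_type1 (lM:=lM') (rM:=rM') (b:=u1 m0) hN');
    by rewrite -phi_E0 -phiM E_mul.
split; last by exists b1, u1.
by move=> m; rewrite /type1_idem -phiM E_mul phi_E.
Qed.
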